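(* For the graph orientation problem on bipartite graphs with arbitrary query costs, \textsc{BestVC} is $\frac43$-competitive, i.e., $\mathbb E[\textsc{BestVC}]\le\frac43\mathbb E[\mathrm{OPT}]$ for every such instance.
   Context: An instance of the graph orientation problem consists of a graph $G=(V,E)$ and, for each vertex $v$, a query cost $c_v\ge0$ and a continuous distribution $d_v$ with minimal support interval $I_v=(\ell_v,r_v)$; it is assumed that for each edge the two intervals intersect and neither contains the other. Weights $w_v\sim d_v$ are independent and querying $v$ reveals $w_v$ at cost $c_v$. For a realization, $Q$ is a feasible query set if knowing $w_u$ for $u\in Q$ and only the intervals for unqueried vertices suffices to identify, for every edge, its endpoint of minimum weight; $\mathbb E[\mathrm{OPT}]$ is the expected minimum cost of a feasible query set. A vertex is mandatory if it belongs to every feasible query set; $p_v$ is the probability that $v$ is mandatory. A vertex cover-based algorithm first queries a vertex cover $VC$ of $G$ and then queries all vertices of $V\setminus VC$ that are mandatory; its expected cost is $\sum_{v\in V}p_vc_v+\sum_{v\in VC}(1-p_v)c_v$. \textsc{BestVC} is the vertex cover-based algorithm whose vertex cover $VC$ minimizes $\sum_{v\in VC}(1-p_v)c_v$ among all vertex covers of $G$. *)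

From HB Require Import structures.
From mathcomp Require Import all_boot all_order all_algebra.
From mathcomp Require Import all_classical all_reals all_analysis.
Set Implicit Arguments. Unset Strict Implicit. Unset Printing Implicit Defensive.
Import Order.TTheory GRing.Theory Num.Theory.
Local Open Scope classical_set_scope.
Local Open Scope ring_scope.

Section GraphOrientation.
Variables (R : realType) (V : finType).

Definition simple_graph (e : rel V) : Prop :=
  (forall u v, e u v = e v u) /\ (forall v, ~~ e v v).

Definition bipartite (e : rel V) : Prop :=
  exists A : {set V}, forall u v, e u v -> (u \in A) != (v \in A).

Definition vertex_cover (e : rel V) (C : {set V}) : Prop :=
  forall u v, e u v -> (u \in C) || (v \in C).

Definition overlapping (l r : V -> R) (u v : V) : Prop :=
  `]l u, r u[ `&` `]l v, r v[ !=set0 /\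
  ~ (`]l u, r u[ `<=` `]l v, r v[) /\ ~ (`]l v, r v[ `<=` `]l u, r u[).

(* w' is consistent with the information obtained by querying Q under
   realization w: queried weights are known, unqueried ones are only known
   to lie in their interval. *)
Definition consistent (l r : V -> R) (Q : {set V}) (w w' : V -> R) : Prop :=
  (forall u, u \in Q -> w' u = w u) /\
  (forall v, v \notin Q -> l v < w' v < r v).

(* Q is feasible for realization w: for every edge, the information
   determines an endpoint of minimum weight. *)
Definition feasible (e : rel V) (l r : V -> R) (Q : {set V}) (w : V -> R)
  : Prop :=
  forall u v, e u v ->
    (forall w', consistent l r Q w w' -> w' u <= w' v) \/
    (forall w', consistent l r Q w w' -> w' v <= w' u).

Definition qcost (c : V -> R) (Q : {set V}) : R := \sum_(v in Q) c v.

(* minimum cost of a feasible query set (V itself is always feasible) *)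
Definition opt_cost (e : rel V) (c l r : V -> R) (w : V -> R) : R :=
  \big[Num.min/qcost c [set: V]]_(Q : {set V} | `[< feasible e l r Q w >])
     qcost c Q.

Definition mandatory (e : rel V) (l r : V -> R) (v : V) (w : V -> R) : Prop :=
  forall Q, feasible e l r Q w -> v \in Q.

Definition vc_alg_cost (e : rel V) (c l r : V -> R) (VC : {set V})
  (w : V -> R) : R :=
  \sum_(v in VC) c v +
  \sum_(v | (v \notin VC) && `[< mandatory e l r v w >]) c v.

End GraphOrientation.

Definition realize {T R : Type} {V : finType} (w : V -> T -> R) (t : T)
  : V -> R := fun v => w v t.

Section Prob.
Variables (d : measure_display) (T : measurableType d) (R : realType)
  (P : probability T R) (V : finType).

Definition mutually_independent (w : V -> T -> R) : Prop :=
  forall B : V -> set R, (forall v, measurable (B v)) ->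
    fine (P (\bigcap_(v in [set: V]) (w v @^-1` B v))) =
    \prod_(v : V) fine (P (w v @^-1` B v)).

Definition continuous_distr (X : T -> R) : Prop :=
  forall x : R, P (X @^-1` [set x]) = 0%E.

Definition min_support_interval (X : T -> R) (l r : R) : Prop :=
  l < r /\ P (X @^-1` `]l, r[) = 1%E /\
  forall a b : R, P (X @^-1` `]a, b[) = 1%E -> `]l, r[ `<=` `]a, b[.

Definition p_mand (e : rel V) (l r : V -> R) (w : V -> T -> R) (v : V) : R :=
  fine (P [set t | mandatory e l r v (realize w t)]).

Definition best_vc (e : rel V) (c l r : V -> R) (w : V -> T -> R)
  (VC : {set V}) : Prop :=
  vertex_cover e VC /\
  forall VC', vertex_cover e VC' ->
    \sum_(v in VC) (1 - p_mand e l r w v) * c v <=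
    \sum_(v in VC') (1 - p_mand e l r w v) * c v.

End Prob.

From HB Require Import structures.
From mathcomp Require Import all_boot all_order all_algebra.
From mathcomp Require Import all_classical all_reals all_analysis.
From mathcomp Require Import ring lra measurable_realfun.
Import Order.TTheory GRing.Theory Num.Theory.
Set Implicit Arguments. Unset Strict Implicit. Unset Printing Implicit Defensive.
Local Open Scope classical_set_scope.
Local Open Scope ring_scope.

(* For a realization w, feasibility and mandatoriness depend
      only on the finite "pattern" of w: the set of pairs (z, v) with w_z in
      the open interval I_v.  An edge uv is settled by Q iff both endpoints
      are queried, or one endpoint is queried and its weight avoids the other
      interval.  So all costs are functions of the random pattern, and the
      expectations become finite sums against the pattern distribution.
   2. Per-edge inequality.  Let p_v = Pr[v mandatory] and q_v = Pr[v in OPT].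
      For an edge uv of a bipartite graph the events "u not mandatory" and
      "v not mandatory" depend on the disjoint neighbourhoods of u and v,
      hence are independent; when both hold, OPT covers uv.  This yields
      (1 - p_u)(1 - p_v) <= (q_u - p_u) + (q_v - p_v).
   3. Charging.  x_v = min(1, (4 q_v - 3 p_v) / (3 (1 - p_v))) is then a
      fractional vertex cover, and threshold rounding on the bipartite graph
      turns it into a vertex cover C with weight (1 - p) at most that of x.
      Since BestVC's cover is optimal for the weights 1 - p,
      E[BestVC] = sum_v p_v c_v + sum_(v in VC) (1 - p_v) c_v
               <= sum_v (p_v + x_v (1 - p_v)) c_v <= 4/3 sum_v q_v c_v
               = 4/3 E[OPT]. *)

Section Patterns.
Variables (R : realType) (V : finType) (e : rel V).

Definition settles_pat (s : {set V * V}) (Q : {set V}) (u v : V) : bool :=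
  ((u \in Q) && ((v \in Q) || ((u, v) \notin s))) ||
  ((v \in Q) && ((v, u) \notin s)).

Definition feasible_pat (s : {set V * V}) (Q : {set V}) : bool :=
  [forall u, forall v, e u v ==> settles_pat s Q u v].

Definition mandatory_pat (s : {set V * V}) (v : V) : bool :=
  [exists z, e z v && ((z, v) \in s)].

Lemma feasible_patT s : feasible_pat s [set: V]%SET.
Proof.
by apply/forallP => u; apply/forallP => v; rewrite /settles_pat !inE /= implybT.
Qed.

Lemma feasible_pat_edge s Q u v :
  feasible_pat s Q -> e u v -> settles_pat s Q u v.
Proof. by move=> /forallP /(_ u) /forallP /(_ v) /implyP. Qed.

Lemma feasible_pat_mandatory s Q v :
  feasible_pat s Q -> mandatory_pat s v -> v \in Q.
Proof.
move=> fQ /existsP [z /andP [ezv zv]].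
by case/orP: (feasible_pat_edge fQ ezv) => /andP [] //; rewrite zv orbF.
Qed.

Lemma feasible_pat_cover s Q u v :
  feasible_pat s Q -> e u v -> (u \in Q) || (v \in Q).
Proof.
move=> fQ euv.
by case/orP: (feasible_pat_edge fQ euv) => /andP [-> //]; rewrite orbT.
Qed.

Definition opt_set (c : V -> R) (s : {set V * V}) : {set V} :=
  [arg min_(Q < [set: V]%SET | feasible_pat s Q) qcost c Q]%O.

Lemma opt_set_feasible c s : feasible_pat s (opt_set c s).
Proof. by rewrite /opt_set; case: arg_minP => [|Q] //; exact: feasible_patT. Qed.

Lemma qcost_indicator (c : V -> R) Q : qcost c Q = \sum_v (v \in Q)%:R * c v.
Proof.
by rewrite /qcost big_mkcond; apply: eq_bigr => v _; case: (v \in Q);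
  rewrite ?mul1r ?mul0r.
Qed.

End Patterns.

Section IntervalModel.
Variables (R : realType) (V : finType) (e : rel V) (l r : V -> R).

Definition in_interval (x : R) (v : V) : bool := (l v < x) && (x < r v).

Definition pattern (w : V -> R) : {set V * V} :=
  [set p | in_interval (w p.1) p.2].

Hypothesis He : simple_graph e.
Hypothesis Hlr : forall v, l v < r v.
Hypothesis Hov : forall u v, e u v ->
  exists m, in_interval m u && in_interval m v.

Definition settled (Q : {set V}) (w : V -> R) (u v : V) : Prop :=
  (forall w', consistent l r Q w w' -> w' u <= w' v) \/
  (forall w', consistent l r Q w w' -> w' v <= w' u).

Lemma settled_sym (Q : {set V}) (w : V -> R) u v :
  settled Q w u v <-> settled Q w v u.
Proof. by split; case=> h; [right | left | right | left]. Qed.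

Lemma edge_neq u v : e u v -> u != v.
Proof.
by move=> euv; apply/eqP => uv; move: euv; rewrite uv (negbTE (He.2 v)).
Qed.

Definition override (Q : {set V}) (w : V -> R) u a v b : V -> R := fun z =>
  if z == u then a else if z == v then b
  else if z \in Q then w z else (l z + r z) / 2.

Lemma override_u (Q : {set V}) (w : V -> R) u a v b : override Q w u a v b u = a.
Proof. by rewrite /override eqxx. Qed.

Lemma override_v (Q : {set V}) (w : V -> R) u a v b :
  u != v -> override Q w u a v b v = b.
Proof. by move=> uv; rewrite /override eq_sym (negbTE uv) eqxx. Qed.

Lemma override_consistent (Q : {set V}) (w : V -> R) u a v b : u != v ->
  (if u \in Q then a = w u else in_interval a u) ->
  (if v \in Q then b = w v else in_interval b v) ->
  consistent l r Q w (override Q w u a v b).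
Proof.
move=> uv hu hv; split=> z.
- case: (eqVneq z u) => [->|zu] zQ; first by rewrite override_u; move: hu; rewrite zQ.
  case: (eqVneq z v) zQ => [->|zv] zQ.
    by rewrite override_v //; move: hv; rewrite zQ.
  by rewrite /override (negbTE zu) (negbTE zv) zQ.
- case: (eqVneq z u) => [->|zu] zQ.
    by rewrite override_u; move: hu; rewrite (negbTE zQ).
  case: (eqVneq z v) zQ => [->|zv] zQ.
    by rewrite override_v //; move: hv; rewrite (negbTE zQ).
  rewrite /override (negbTE zu) (negbTE zv) (negbTE zQ).
  by have := Hlr z => lt_lr; apply/andP; split; lra.
Qed.

Lemma not_settled (Q : {set V}) (w w1 w2 : V -> R) u v :
  consistent l r Q w w1 -> consistent l r Q w w2 ->
  w1 v < w1 u -> w2 u < w2 v -> ~ settled Q w u v.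
Proof. by move=> c1 c2 h1 h2 [H|H]; [have := H _ c1 | have := H _ c2]; lra. Qed.

(* an edge with no queried endpoint is unsettled: its intervals overlap *)
Lemma settled_none (Q : {set V}) (w : V -> R) u v :
  e u v -> u \notin Q -> v \notin Q -> ~ settled Q w u v.
Proof.
move=> euv uQ vQ; have uv := edge_neq euv.
have [m /andP [/andP [m1 m2] /andP [m3 m4]]] := Hov euv.
have cons a b : in_interval a u -> in_interval b v ->
    consistent l r Q w (override Q w u a v b).
  by move=> ha hb; apply: override_consistent; rewrite ?(negbTE uQ) ?(negbTE vQ).
pose a1 := (m + r u) / 2; pose b1 := (l v + m) / 2.
pose a2 := (l u + m) / 2; pose b2 := (m + r v) / 2.
apply: (not_settled (cons a1 b1 _ _) (cons a2 b2 _ _));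
  rewrite ?override_u ?override_v // /in_interval /a1 /b1 /a2 /b2;
  try (apply/andP; split); lra.
Qed.

Lemma settled_one (Q : {set V}) (w : V -> R) u v :
  u != v -> u \in Q -> v \notin Q ->
  settled Q w u v <-> ~~ in_interval (w u) v.
Proof.
move=> uv uQ vQ; case hI: (in_interval (w u) v); split=> //=; last first.
  move: hI; rewrite /in_interval => /negbT; rewrite negb_and -!leNgt.
  case/orP => h; [left | right] => w' [Hq Hn]; rewrite (Hq u uQ);
    have /andP [h1 h2] := Hn v vQ; lra.
move: hI => /andP [h1 h2] S; exfalso.
have cons b : in_interval b v -> consistent l r Q w (override Q w u (w u) v b).
  by move=> hb; apply: override_consistent; rewrite ?uQ ?(negbTE vQ).
pose b1 := (l v + w u) / 2; pose b2 := (w u + r v) / 2.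
apply: (not_settled (cons b1 _) (cons b2 _) _ _ S);
  rewrite ?override_u ?override_v // /in_interval /b1 /b2;
  try (apply/andP; split); lra.
Qed.

Lemma settledE (Q : {set V}) (w : V -> R) u v : e u v ->
  settled Q w u v <-> settles_pat (pattern w) Q u v.
Proof.
move=> euv; have uv := edge_neq euv; have vu : v != u by rewrite eq_sym.
rewrite /settles_pat !inE /=.
case uQ: (u \in Q); case vQ: (v \in Q) => /=.
- split=> // _; case: (leP (w u) (w v)) => h; [left | right] => w' [Hq _];
    by rewrite !Hq // ltW.
- rewrite orbF; exact: settled_one uv uQ (negbT vQ).
- rewrite settled_sym; exact: settled_one vu vQ (negbT uQ).
- by split=> // /(settled_none euv (negbT uQ) (negbT vQ)).
Qed.

Lemma feasibleE (Q : {set V}) (w : V -> R) :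
  feasible e l r Q w <-> feasible_pat e (pattern w) Q.
Proof.
split=> [H | /feasible_pat_edge H u v euv]; last exact/(settledE Q w euv)/H.
by apply/forallP => u; apply/forallP => v; apply/implyP => euv;
  apply/(settledE Q w euv)/H.
Qed.

(* v is mandatory iff V minus v is infeasible, i.e. some neighbour's weight
   lies in I_v *)
Lemma mandatoryE v (w : V -> R) :
  mandatory e l r v w <-> mandatory_pat e (pattern w) v.
Proof.
split=> [Hm | Hm Q /feasibleE fQ]; last exact: feasible_pat_mandatory fQ Hm.
apply: contraT => /existsPn nm.
suff /Hm : feasible e l r (~: [set v]) w by rewrite in_setC1 eqxx.
apply/feasibleE/forallP => a; apply/forallP => b; apply/implyP => eab.
rewrite /settles_pat !in_setC1.
case: (eqVneq b v) => [bv|bv].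
  have av : a != v by rewrite -bv; exact: edge_neq eab.
  by rewrite av /=; have := nm a; rewrite -bv eab /= => ->.
case: (eqVneq a v) => [av|av] //=.
by have := nm b; rewrite -av He.1 eab => ->.
Qed.

Lemma opt_cost_pattern (c : V -> R) w : (forall v, 0 <= c v) ->
  opt_cost e c l r w = qcost c (opt_set e c (pattern w)).
Proof.
move=> Hc; rewrite /opt_cost (eq_bigl (feasible_pat e (pattern w))); last first.
  by move=> Q; apply/asboolP/idP => /feasibleE.
apply: bigmin_eq_arg; first exact: feasible_patT.
move=> Q _; rewrite !qcost_indicator; apply: ler_sum => v _.
by rewrite inE ler_wpM2r // ler_nat leq_b1.
Qed.

Lemma vc_alg_cost_pattern (c : V -> R) VC w : vc_alg_cost e c l r VC w =
  \sum_(v in VC) c v +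
  \sum_(v | v \notin VC) (mandatory_pat e (pattern w) v)%:R * c v.
Proof.
congr (_ + _); rewrite big_mkcondr /=; apply: eq_bigr => v _.
case: (boolP (mandatory_pat e (pattern w) v)) => hm.
  by rewrite mul1r; case: asboolP => // /mandatoryE; rewrite hm.
by rewrite mul0r; case: asboolP => // /mandatoryE; rewrite (negbTE hm).
Qed.

End IntervalModel.

(* The threshold t in [0, 1] selects v in A iff t <= x v and v outside A iff
   1 - x v <= t; averaging the cost of these covers over t gives sum_v k v x v. *)
Section ThresholdRounding.
Variables (R : realType) (V : finType) (e : rel V) (A : {set V}).
Hypothesis Hbip : forall u v, e u v -> (u \in A) != (v \in A).
Variables (x k : V -> R).
Hypotheses (x01 : forall v, 0 <= x v <= 1) (k_ge0 : forall v, 0 <= k v)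
  (x_cover : forall u v, e u v -> 1 <= x u + x v).

Definition threshold_set (t : R) : {set V} :=
  [set v | if v \in A then t <= x v else 1 - x v <= t].

Lemma threshold_set_cover t : vertex_cover e (threshold_set t).
Proof.
move=> u v euv; rewrite !inE.
have := x_cover euv; have := Hbip euv.
case: (u \in A); case: (v \in A) => //= _ h.
- by case: (leP t (x u)) => //= h2; lra.
- by case: (leP t (x v)) => //= h2; rewrite ?orbT //= orbF; lra.
Qed.

Definition selecting (v : V) : set R :=
  if v \in A then [set` `[0, x v]] else [set` `[1 - x v, 1]].

Lemma selecting_measurable v : measurable (selecting v).
Proof. by rewrite /selecting; case: ifP => _; exact: measurable_itv. Qed.

Lemma selecting_indic v t : 0 <= t <= 1 ->
  \1_(selecting v) t = (v \in threshold_set t)%:R :> R.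
Proof.
move=> /andP [t0 t1]; rewrite indicE inE; have /andP [x0 x1] := x01 v.
by rewrite /selecting; case: (v \in A); rewrite mem_setE in_itv /= ?t0 ?t1 ?andbT.
Qed.

Lemma lebesgue_itv_cc (a b : R) : a <= b ->
  lebesgue_measure [set` `[a, b]] = (b - a)%:E.
Proof.
move=> ab; rewrite lebesgue_measure_itv /= lte_fin.
case: ltP => h; first by rewrite EFinB.
have -> : a = b by apply/le_anti; rewrite ab h.
by rewrite subrr.
Qed.

Lemma lebesgue_selecting v :
  lebesgue_measure (selecting v `&` [set` `[0, 1]]) = (x v)%:E.
Proof.
have /andP [x0 x1] := x01 v.
rewrite (setIidl (_ : selecting v `<=` _)); last first.
  by move=> t; rewrite /selecting; case: ifP => _ /=; rewrite !in_itv /=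
    => /andP [h1 h2]; apply/andP; split; lra.
rewrite /selecting; case: ifP => _; rewrite lebesgue_itv_cc ?subr0 //; last lra.
by congr (_%:E); lra.
Qed.

Lemma integral_selecting :
  (\int[lebesgue_measure]_(t in [set` `[0, 1]%R])
     (\sum_v (k v * \1_(selecting v) t)%:E)
   = (\sum_v k v * x v)%:E)%E.
Proof.
rewrite ge0_integral_sum //; last first.
- by move=> v t _; rewrite lee_fin mulr_ge0 // indicE ler0n.
- move=> v; apply/measurable_EFinP; apply: measurable_funM => //.
  exact: measurable_indic (selecting_measurable v).
rewrite -sumEFin; apply: eq_bigr => v _.
under eq_integral do rewrite EFinM.
rewrite ge0_integralZl_EFin //.
- rewrite integral_indic; last exact: selecting_measurable.
  by rewrite EFinM; congr (_ * _)%E; exact: lebesgue_selecting.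
- exact: measurable_itv.
- by apply/measurable_EFinP; exact: measurable_indic (selecting_measurable v).
Qed.

Lemma threshold_rounding :
  exists C, vertex_cover e C /\ \sum_(v in C) k v <= \sum_v x v * k v.
Proof.
have coverT : `[< vertex_cover e [set: V]%SET >] by apply/asboolP => u v; rewrite inE.
case: (arg_minP (P := fun C : {set V} => `[< vertex_cover e C >])
  (fun C : {set V} => \sum_(v in C) k v) coverT) => C /asboolP coverC minC.
exists C; split=> //.
suff : ((\sum_(v in C) k v)%:E <= (\sum_v k v * x v)%:E)%E.
  by rewrite lee_fin; under [X in _ <= X]eq_bigr do rewrite mulrC.
rewrite -integral_selecting -[X in (X <= _)%E]mule1.
rewrite -[1%E](_ : lebesgue_measure [set` `[0, 1]] = 1%E); last first.
  by rewrite lebesgue_itv_cc // subr0.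
rewrite -integral_cst //; apply: ge0_le_integral => //.
- by move=> t _; rewrite lee_fin sumr_ge0.
- apply: emeasurable_sum => v; apply/measurable_EFinP; apply: measurable_funM => //.
  exact: measurable_indic (selecting_measurable v).
move=> t t01; rewrite sumEFin lee_fin.
have -> : \sum_v k v * \1_(selecting v) t = \sum_(v in threshold_set t) k v.
  rewrite [RHS]big_mkcond /=; apply: eq_bigr => v _.
  rewrite selecting_indic; last by move: t01; rewrite /= in_itv.
  by case: (v \in threshold_set t); rewrite ?mulr1 ?mulr0.
exact/minC/asboolP/threshold_set_cover.
Qed.

End ThresholdRounding.

(* The numerical heart of the 4/3 bound: with a = 1 - p_u, b = 1 - p_v and
   Y_u = q_u - p_u, Y_v = q_v - p_v, the candidate values X, Z of x_u, x_v
   defined by 3 a X = 1 - a + 4 Y_u and 3 b Z = 1 - b + 4 Y_v cover the edge. *)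
Lemma charging_inequality (R : realFieldType) (a b Yu Yv X Z : R) :
  0 < a -> a <= 1 -> 0 < b -> b <= 1 -> 0 <= Yu -> 0 <= Yv ->
  a * b <= Yu + Yv ->
  X * (3 * a) = 1 - a + 4 * Yu -> Z * (3 * b) = 1 - b + 4 * Yv -> 1 <= X + Z.
Proof.
move=> a0 a1 b0 b1 yu yv hab hX hZ.
have key : 3 * (a * b) <= b * (1 - a + 4 * Yu) + a * (1 - b + 4 * Yv).
  case: (leP a b) => h.
    have h1 : a * Yu <= b * Yu by apply: ler_wpM2r.
    have h2 : a * (a * b) <= a * (Yu + Yv) by apply: ler_wpM2l; lra.
    have h3 : 0 <= b * ((2 * a - 1) * (2 * a - 1)).
      by apply: mulr_ge0; [lra | rewrite -expr2 sqr_ge0].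
    have h4 : 0 <= a * (1 - b) by apply: mulr_ge0; lra.
    nra.
  have h1 : b * Yv <= a * Yv by apply: ler_wpM2r; lra.
  have h2 : b * (a * b) <= b * (Yu + Yv) by apply: ler_wpM2l; lra.
  have h3 : 0 <= a * ((2 * b - 1) * (2 * b - 1)).
    by apply: mulr_ge0; [lra | rewrite -expr2 sqr_ge0].
  have h4 : 0 <= b * (1 - a) by apply: mulr_ge0; lra.
  nra.
have ab3 : 0 < 3 * (a * b) by rewrite mulr_gt0 ?ltr0n ?mulr_gt0.
rewrite -(ler_pM2l ab3) mulr1.
have -> : 3 * (a * b) * (X + Z) = b * (X * (3 * a)) + a * (Z * (3 * b)) by ring.
by rewrite hX hZ.
Qed.

Section FractionalCharging.
Variables (R : realType) (V : finType) (e : rel V) (A : {set V}).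
Hypothesis Hbip : forall u v, e u v -> (u \in A) != (v \in A).
Variables (p q c : V -> R).
Hypotheses (p_ge0 : forall v, 0 <= p v) (p_le_q : forall v, p v <= q v)
  (q_le1 : forall v, q v <= 1) (c_ge0 : forall v, 0 <= c v).
Hypothesis edge_charge : forall u v, e u v ->
  (1 - p u) * (1 - p v) <= (q u - p u) + (q v - p v).
Variable VC : {set V}.
Hypothesis VC_min : forall C, vertex_cover e C ->
  \sum_(v in VC) (1 - p v) * c v <= \sum_(v in C) (1 - p v) * c v.

Definition charge_ratio (v : V) : R := (4 * q v - 3 * p v) / (3 * (1 - p v)).

Definition frac_cover (v : V) : R :=
  if p v < 1 then (if charge_ratio v <= 1 then charge_ratio v else 1) else 1.

Lemma charge_ratioE v : p v < 1 ->
  charge_ratio v * (3 * (1 - p v)) = 4 * q v - 3 * p v.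
Proof. by move=> h; rewrite /charge_ratio divfK //; apply/eqP => h2; lra. Qed.

Lemma frac_cover01 v : 0 <= frac_cover v <= 1.
Proof.
rewrite /frac_cover; case: ifP => hp; last by rewrite ler01 lexx.
case: ifP => h1; last by rewrite ler01 lexx.
rewrite h1 andbT /charge_ratio divr_ge0 //.
  by have := p_le_q v; have := p_ge0 v; lra.
by have := p_ge0 v; lra.
Qed.

Lemma frac_cover_cost v : p v + frac_cover v * (1 - p v) <= 4 / 3 * q v.
Proof.
have := p_le_q v; have := q_le1 v; have := p_ge0 v => h0 h1 h2.
rewrite /frac_cover; case: ifP => hp; last by move: hp; rewrite ltNge => /negbFE; lra.
have hF := charge_ratioE hp.
case: ifP => hF1.
  have -> : charge_ratio v * (1 - p v) = (4 * q v - 3 * p v) / 3.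
    by rewrite -hF; field.
  lra.
have h4 : 3 * (1 - p v) < charge_ratio v * (3 * (1 - p v)).
  by rewrite -{1}[3 * (1 - p v)]mul1r ltr_pM2r ?ltNge ?hF1 //; lra.
lra.
Qed.

Lemma frac_cover_edge u v : e u v -> 1 <= frac_cover u + frac_cover v.
Proof.
move=> euv; have /andP [xu0 _] := frac_cover01 u; have /andP [xv0 _] := frac_cover01 v.
move: xu0 xv0; rewrite /frac_cover.
case: (ifP (p u < 1)) => hu; last lra.
case: (ifP (charge_ratio u <= 1)) => hu1; last lra.
case: (ifP (p v < 1)) => hv; last lra.
case: (ifP (charge_ratio v <= 1)) => hv1; last lra.
move=> _ _; have := p_le_q u; have := p_le_q v; have := p_ge0 u; have := p_ge0 v.
move=> pv0 pu0 pqv pqu.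
apply: (@charging_inequality R (1 - p u) (1 - p v) (q u - p u) (q v - p v));
  rewrite ?charge_ratioE //; try lra.
exact: edge_charge.
Qed.

Lemma fractional_charging :
  \sum_(v in VC) c v + \sum_(v | v \notin VC) p v * c v <=
  4 / 3 * \sum_v q v * c v.
Proof.
have weight_ge0 v : 0 <= (1 - p v) * c v.
  by rewrite mulr_ge0 // subr_ge0 (le_trans (p_le_q v)).
have [C [coverC costC]] :=
  threshold_rounding Hbip frac_cover01 weight_ge0 frac_cover_edge.
have -> : \sum_(v in VC) c v + \sum_(v | v \notin VC) p v * c v =
    \sum_v p v * c v + \sum_(v in VC) (1 - p v) * c v.
  rewrite [\sum_v p v * c v](bigID (mem VC)) /=.
  rewrite (eq_bigr (fun v => p v * c v + (1 - p v) * c v)); last by move=> v _; ring.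
  rewrite big_split /=; ring.
have bound : \sum_v p v * c v + \sum_v frac_cover v * ((1 - p v) * c v) <=
    4 / 3 * \sum_v q v * c v.
  rewrite -big_split /= mulr_sumr; apply: ler_sum => v _.
  rewrite mulrA -mulrDl [X in _ <= X]mulrA; apply: ler_wpM2r => //.
  exact: frac_cover_cost.
have := le_trans (VC_min coverC) costC; lra.
Qed.

End FractionalCharging.

Section FiniteDistribution.
Variables (R : realType) (S : finType) (mass : S -> R).
Hypotheses (mass_ge0 : forall s, 0 <= mass s) (mass_sum1 : \sum_s mass s = 1).

Definition pprob (g : S -> bool) : R := \sum_s (g s)%:R * mass s.

Lemma pprob_ge0 g : 0 <= pprob g.
Proof. by apply: sumr_ge0 => s _; rewrite mulr_ge0. Qed.

Lemma pprob_le (g h : S -> bool) : (forall s, g s -> h s) -> pprob g <= pprob h.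
Proof.
move=> gh; apply: ler_sum => s _; apply: ler_wpM2r => //.
by case: (g s) (gh s) => // ->.
Qed.

Lemma pprob_le1 g : pprob g <= 1.
Proof.
rewrite -mass_sum1; apply: ler_sum => s _.
by case: (g s); rewrite ?mul1r ?mul0r.
Qed.

Lemma pprob_compl g : 1 - pprob g = pprob (fun s => ~~ g s).
Proof.
rewrite -[X in X - _]mass_sum1 -sumrB; apply: eq_bigr => s _.
by case: (g s); rewrite ?mul1r ?mul0r ?subrr ?subr0.
Qed.

Lemma expect_indicator_sum (I : finType) (a : pred I) (g : I -> S -> bool)
    (c : I -> R) :
  \sum_s (\sum_(i | a i) (g i s)%:R * c i) * mass s =
  \sum_(i | a i) pprob (g i) * c i.
Proof.
under eq_bigr do rewrite mulr_suml.
rewrite exchange_big /=; apply: eq_bigr => i _.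
by rewrite /pprob mulr_suml; apply: eq_bigr => s _; rewrite mulrAC.
Qed.

End FiniteDistribution.

Section EdgeInequality.
Variables (R : realType) (V : finType) (e : rel V) (mass : {set V * V} -> R).
Hypotheses (mass_ge0 : forall s, 0 <= mass s) (mass_sum1 : \sum_s mass s = 1).
Variable Q : {set V * V} -> {set V}.
Hypothesis Q_feasible : forall s, feasible_pat e s (Q s).

Definition mand_prob (v : V) : R := pprob mass (mandatory_pat e ^~ v).
Definition query_prob (v : V) : R := pprob mass (fun s => v \in Q s).

(* p_v <= q_v: mandatory vertices are always queried *)
Lemma mand_le_query v : mand_prob v <= query_prob v.
Proof. by apply: pprob_le => // s; exact: feasible_pat_mandatory (Q_feasible s). Qed.

(* pointwise form: [u, v not mandatory] <= [u in Q] - [u mand] + [v in Q] - [v mand] *)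
Lemma indicator_edge_bound (a b x y : bool) : a ==> x -> b ==> y ->
  (~~ a && ~~ b) ==> (x || y) ->
  (~~ a && ~~ b)%:R <= (x%:R - a%:R) + (y%:R - b%:R) :> R.
Proof.
by case: a; case: b; case: x; case: y => //= _ _ _; rewrite ?mulr0n ?mulr1n; lra.
Qed.

Lemma edge_inequality u v : e u v ->
  pprob mass (fun s => ~~ mandatory_pat e s u && ~~ mandatory_pat e s v) =
  pprob mass (fun s => ~~ mandatory_pat e s u) *
  pprob mass (fun s => ~~ mandatory_pat e s v) ->
  (1 - mand_prob u) * (1 - mand_prob v) <=
  (query_prob u - mand_prob u) + (query_prob v - mand_prob v).
Proof.
move=> euv indep; rewrite /mand_prob !pprob_compl // -indep.
rewrite /query_prob /pprob -!sumrB -big_split /=; apply: ler_sum => s _.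
rewrite -!mulrBl -mulrDl; apply: ler_wpM2r => //.
apply: indicator_edge_bound; apply/implyP.
- exact: feasible_pat_mandatory.
- exact: feasible_pat_mandatory.
- by move=> _; exact: feasible_pat_cover euv.
Qed.

End EdgeInequality.

Section RandomPattern.
Variables (d : measure_display) (T : measurableType d) (R : realType)
  (P : probability T R) (V : finType) (l r : V -> R) (w : V -> T -> R).
Hypothesis Hmeas : forall v, measurable_fun setT (w v).

Definition random_pattern (t : T) : {set V * V} := pattern l r (realize w t).

Definition pattern_event (s : {set V * V}) : set T :=
  [set t | random_pattern t = s].

Definition pattern_mass (s : {set V * V}) : R := fine (P (pattern_event s)).

Lemma in_interval_measurable z v :
  measurable [set t | in_interval l r (w z t) v].
Proof.
have := Hmeas z measurableT (measurable_itv `]l v, r v[); rewrite setTI.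
suff -> : [set t | in_interval l r (w z t) v] = w z @^-1` [set` `]l v, r v[]
  by [].
by apply/seteqP; split => t /=; rewrite /in_interval in_itv.
Qed.

(* each pattern is a finite Boolean combination of events w_z in I_v *)
Lemma pattern_event_measurable s : measurable (pattern_event s).
Proof.
have -> : pattern_event s = \bigcap_(zv in [set: V * V])
    [set t | (zv \in s) = in_interval l r (w zv.1 t) zv.2].
  apply/seteqP; split => t /=; first by move=> <- zv _; rewrite inE.
  by move=> H; apply/setP => zv; rewrite inE; symmetry; exact: H.
apply: fin_bigcap_measurable; first exact: finite_finset.
move=> [z v] _ /=; case: ((z, v) \in s).
- suff -> : [set t | true = in_interval l r (w z t) v] =
      [set t | in_interval l r (w z t) v] by exact: in_interval_measurable.
  by apply/seteqP; split => t /=.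
- suff -> : [set t | false = in_interval l r (w z t) v] =
      ~` [set t | in_interval l r (w z t) v].
    exact/measurableC/in_interval_measurable.
  by apply/seteqP; split => t /=; [move=> <- | move/negP/negbTE => ->].
Qed.

Lemma pattern_mass_ge0 s : 0 <= pattern_mass s.
Proof. exact/fine_ge0/measure_ge0. Qed.

Lemma integral_pattern (f : {set V * V} -> R) : (forall s, 0 <= f s) ->
  (\int[P]_t (f (random_pattern t))%:E = (\sum_s f s * pattern_mass s)%:E)%E.
Proof.
move=> f_ge0; have indic_pattern s t :
    \1_(pattern_event s) t = (random_pattern t == s)%:R :> R.
  rewrite indicE; case: (eqVneq (random_pattern t) s) => h.
    by rewrite mem_set.
  by rewrite memNset //; exact/eqP.
transitivity (\int[P]_t (\sum_s (f s)%:E * (\1_(pattern_event s) t)%:E))%E.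
  apply: eq_integral => t _; rewrite sumEFin; congr (_%:E).
  rewrite (bigD1 (random_pattern t)) //= indic_pattern eqxx mulr1 big1 ?addr0 //.
  by move=> s hs; rewrite indic_pattern eq_sym (negbTE hs) mulr0.
rewrite ge0_integral_sum //; last first.
- by move=> s t _; apply: mule_ge0; rewrite lee_fin ?f_ge0 // indicE ler0n.
- move=> s; apply: emeasurable_funM => //; apply/measurable_EFinP.
  exact: measurable_indic (pattern_event_measurable s).
rewrite -sumEFin; apply: eq_bigr => s _; rewrite ge0_integralZl_EFin //.
- rewrite integral_indic ?setIT ?EFinM /pattern_mass ?fineK //.
    exact: fin_num_measure (pattern_event_measurable s).
  exact: pattern_event_measurable.
- by apply/measurable_EFinP; exact: measurable_indic (pattern_event_measurable s).
Qed.

Lemma pattern_pred_measurable (g : {set V * V} -> bool) :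
  measurable [set t | g (random_pattern t)].
Proof.
have -> : [set t | g (random_pattern t)] =
    \bigcup_(s in [set s | g s]) pattern_event s.
  apply/seteqP; split => t /=; first by move=> h; exists (random_pattern t).
  by move=> [s gs]; rewrite /pattern_event /= => ->.
apply: fin_bigcup_measurable; first exact: finite_finset.
by move=> s _; exact: pattern_event_measurable.
Qed.

Lemma prob_pattern (g : {set V * V} -> bool) :
  fine (P [set t | g (random_pattern t)]) = pprob pattern_mass g.
Proof.
rewrite -[X in fine (P X)]setIT -integral_indic //; last exact: pattern_pred_measurable.
rewrite (eq_integral (fun t => ((g (random_pattern t))%:R)%:E)); last first.
  move=> t _; rewrite indicE; case: (boolP (g (random_pattern t))) => gt.
    by rewrite mem_set.
  by rewrite memNset //; exact/negP.
by rewrite (@integral_pattern (fun s => (g s)%:R)) // => s; exact: ler0n.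
Qed.

Lemma pattern_mass_sum1 : \sum_s pattern_mass s = 1.
Proof.
have := prob_pattern (fun _ => true).
have -> : [set t | true] = [set: T] by apply/seteqP; split.
rewrite probability_setT /= => ->.
by apply: eq_bigr => s _; rewrite mul1r.
Qed.

(* "x is not mandatory" means: every neighbour z of x has w_z outside I_x *)
Definition avoid_set (e : rel V) (x z : V) : set R :=
  if e z x then ~` [set` `]l x, r x[] else setT.

Lemma avoid_set_measurable e x z : measurable (avoid_set e x z).
Proof.
rewrite /avoid_set; case: ifP => _; last exact: measurableT.
apply: measurableC; exact: measurable_itv.
Qed.

Lemma not_mandatory_event e x :
  [set t | ~~ mandatory_pat e (random_pattern t) x] =
  \bigcap_(z in [set: V]) (w z @^-1` avoid_set e x z).
Proof.
apply/seteqP; split => t /=.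
  move=> /existsPn h z _; rewrite /avoid_set; case: ifP => ez //=.
  have := h z; rewrite ez /random_pattern inE /= /in_interval => hz.
  by rewrite in_itv /=; apply/negP.
move=> H; apply/existsPn => z; apply/negP => /andP [ez].
rewrite /random_pattern inE /= /in_interval => hz.
by have := H z I; rewrite /avoid_set ez /=; apply; rewrite in_itv.
Qed.

(* adjacent vertices of a bipartite graph have disjoint neighbourhoods, so
   under independent weights they are independently non-mandatory *)
Lemma not_mandatory_independent (e : rel V) (A : {set V}) :
  (forall u v, e u v -> (u \in A) != (v \in A)) ->
  mutually_independent P w -> forall u v, e u v ->
  pprob pattern_mass
    (fun s => ~~ mandatory_pat e s u && ~~ mandatory_pat e s v) =
  pprob pattern_mass (fun s => ~~ mandatory_pat e s u) *
  pprob pattern_mass (fun s => ~~ mandatory_pat e s v).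
Proof.
move=> Hbip Hindep u v euv; rewrite -!prob_pattern.
have -> : [set t | ~~ mandatory_pat e (random_pattern t) u &&
                   ~~ mandatory_pat e (random_pattern t) v] =
    \bigcap_(z in [set: V]) (w z @^-1` (avoid_set e u z `&` avoid_set e v z)).
  have -> : [set t | ~~ mandatory_pat e (random_pattern t) u &&
                      ~~ mandatory_pat e (random_pattern t) v] =
      [set t | ~~ mandatory_pat e (random_pattern t) u] `&`
      [set t | ~~ mandatory_pat e (random_pattern t) v].
    by apply/seteqP; split => t /=; [move/andP | move=> [-> ->]].
  rewrite !not_mandatory_event; apply/seteqP; split => t /=.
    by move=> [h1 h2] z _; split; [exact: h1 | exact: h2].
  by move=> h; split => z _; have [] := h z I.
have mA x z : measurable (avoid_set e x z) := avoid_set_measurable e x z.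
rewrite !not_mandatory_event (Hindep _ (fun z => measurableI _ _ (mA u z) (mA v z))).
rewrite (Hindep _ (mA u)) (Hindep _ (mA v)).
rewrite -big_split /=; apply: eq_bigr => z _.
have no_common : ~~ (e z u && e z v).
  apply/negP => /andP [zu zv].
  have := Hbip _ _ zu; have := Hbip _ _ zv; have := Hbip _ _ euv.
  by case: (z \in A); case: (u \in A); case: (v \in A).
have P1 : fine (P (w z @^-1` [set: R])) = 1.
  by rewrite preimage_setT probability_setT.
rewrite /avoid_set; move: no_common; case: (e z u); case: (e z v) => //= _.
- by rewrite setIT P1 mulr1.
- by rewrite setTI P1 mul1r.
- by rewrite setIT P1 mul1r.
Qed.

End RandomPattern.

Section ExpectedCosts.
Variables (d : measure_display) (T : measurableType d) (R : realType)
  (P : probability T R) (V : finType) (e : rel V) (c l r : V -> R)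
  (w : V -> T -> R).
Hypotheses (He : simple_graph e) (Hlr : forall v, l v < r v)
  (Hov : forall u v, e u v -> exists m, in_interval l r m u && in_interval l r m v)
  (Hc : forall v, 0 <= c v) (Hmeas : forall v, measurable_fun setT (w v)).

Lemma p_mandE v : p_mand P e l r w v = mand_prob e (pattern_mass P l r w) v.
Proof.
rewrite /p_mand /mand_prob -prob_pattern //; do 2 f_equal.
by apply/seteqP; split => t /= /(mandatoryE He Hlr Hov).
Qed.

Lemma expected_vc_alg_cost VC :
  (\int[P]_t (vc_alg_cost e c l r VC (realize w t))%:E =
   (\sum_(v in VC) c v + \sum_(v | v \notin VC) p_mand P e l r w v * c v)%:E)%E.
Proof.
pose F s := \sum_(v in VC) c v +
  \sum_(v | v \notin VC) (mandatory_pat e s v)%:R * c v.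
rewrite (eq_integral (fun t => (F (random_pattern l r w t))%:E)); last first.
  by move=> t _; rewrite vc_alg_cost_pattern.
rewrite integral_pattern //; last first.
  by move=> s; rewrite addr_ge0 ?sumr_ge0 // => v _; rewrite mulr_ge0.
congr (_%:E); rewrite /F; under eq_bigr do rewrite mulrDl.
rewrite big_split /= -mulr_sumr pattern_mass_sum1 // mulr1 expect_indicator_sum.
by congr (_ + _); apply: eq_bigr => v _; rewrite p_mandE.
Qed.

Lemma expected_opt_cost :
  (\int[P]_t (opt_cost e c l r (realize w t))%:E =
   (\sum_v query_prob (pattern_mass P l r w) (opt_set e c) v * c v)%:E)%E.
Proof.
pose F s := qcost c (opt_set e c s).
rewrite (eq_integral (fun t => (F (random_pattern l r w t))%:E)); last first.
  by move=> t _; rewrite opt_cost_pattern.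
rewrite integral_pattern //; last by move=> s; apply: sumr_ge0.
congr (_%:E); under eq_bigr do rewrite /F qcost_indicator.
exact: expect_indicator_sum.
Qed.

End ExpectedCosts.

Theorem theorem4p1 (d : measure_display) (T : measurableType d)
  (R : realType) (P : probability T R) (V : finType) (e : rel V)
  (c l r : V -> R) (w : V -> T -> R)
  (Hgraph : simple_graph e) (Hbip : bipartite e)
  (Hc : forall v, 0 <= c v)
  (Hmeas : forall v, measurable_fun setT (w v))
  (Hindep : mutually_independent P w)
  (Hcont : forall v, continuous_distr P (w v))
  (Hsupp : forall v, min_support_interval P (w v) (l v) (r v))
  (Hedges : forall u v, e u v -> overlapping l r u v)
  (VC : {set V}) (Hbest : best_vc P e c l r w VC) :
  (\int[P]_t (vc_alg_cost e c l r VC (realize w t))%:E <=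
   (4 / 3 : R)%:E * \int[P]_t (opt_cost e c l r (realize w t))%:E)%E.
Proof.
have Hlr v : l v < r v by have [] := Hsupp v.
have Hov u v : e u v -> exists m, in_interval l r m u && in_interval l r m v.
  move=> /Hedges [[m [/= mu mv]] _]; exists m.
  by move: mu mv; rewrite /in_interval !in_itv /= => -> ->.
have [A HA] := Hbip.
have mass_ge0 := pattern_mass_ge0 P l r w.
have mass_sum1 := pattern_mass_sum1 P l r Hmeas.
have p_mandE := p_mandE P Hgraph Hlr Hov Hmeas.
rewrite (expected_vc_alg_cost P Hgraph Hlr Hov Hc Hmeas).
rewrite (expected_opt_cost P Hgraph Hlr Hov Hc Hmeas) -EFinM lee_fin.
apply: (fractional_charging HA (q := query_prob _ (opt_set e c))) => //.
- by move=> v; rewrite p_mandE; exact: pprob_ge0.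
- move=> v; rewrite p_mandE; apply: mand_le_query => // s; exact: opt_set_feasible.
- by move=> v; exact: pprob_le1.
- move=> u v euv; rewrite !p_mandE.
  apply: edge_inequality => //; first exact: opt_set_feasible.
  exact: not_mandatory_independent HA Hindep u v euv.
- exact: Hbest.2.
Qed.
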